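(* There exist finite graphs $\mathbb{H}_1,\mathbb{H}_2,\dots$ such that (1) $\mathbb{H}_n$ is not 3-colorable for every $n\ge1$; (2) $\mathbb{H}_{n+1}$ maps homomorphically to $\mathbb{H}_n$ for every $n\ge1$; (3) for every non-trivial height 1 condition $\Sigma$ there exists $n\ge1$ such that $\Sigma$ implies $\Sigma_{\mathbb{H}_n}$.
   Context: A graph is a structure $(V,E)$ with a single symmetric binary relation $E$ (loops allowed); it is 3-colorable if it admits a homomorphism to the complete loopless graph on three vertices. A clone on a set $A$ is a set of finitary operations on $A$ containing all projections and closed under composition. A height 1 condition is a finite set of identities $f(x_{\pi(1)},\dots,x_{\pi(n)})\approx g(x_{\rho(1)},\dots,x_{\rho(m)})$ (function symbols, arbitrary maps $\pi,\rho$, universally quantified); a clone satisfies it if its symbols can be assigned functions of the clone of the right arities making all identities true. $\Sigma$ implies $\Sigma'$ if every clone satisfying $\Sigma$ satisfies $\Sigma'$; $\Sigma$ is trivial if it is satisfied in every clone. For a finite graph $\mathbb{G}=(V,E)$, $\Sigma_{\mathbb{G}}$ is the height 1 condition with a ternary symbol $f_v$ for each $v\in V$, a $6$-ary symbol $g_{(u,v)}$ for each $(u,v)\in E$, and, for each $(u,v)\in E$, the identities $f_u(x,y,z)\approx g_{(u,v)}(x,y,x,z,y,z)$ and $f_v(x,y,z)\approx g_{(u,v)}(y,x,z,x,z,y)$. *)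

From mathcomp Require Import all_boot.
Set Implicit Arguments. Unset Strict Implicit. Unset Printing Implicit Defensive.

Record h1graph := H1Graph {
  gV : finType;
  gE : rel gV;
  gE_sym : symmetric gE }.

Definition graph_hom (G H : h1graph) : Prop :=
  exists h : gV G -> gV H, forall x y, gE x y -> gE (h x) (h y).

Definition K3_rel : rel 'I_3 := fun x y => x != y.
Lemma K3_sym : symmetric K3_rel.
Proof. by move=> x y; rewrite /K3_rel eq_sym. Qed.
Definition K3 : h1graph := H1Graph K3_sym.

Definition three_colorable (G : h1graph) : Prop := graph_hom G K3.

Definition op (A : Type) (n : nat) := ('I_n -> A) -> A.

Record clone (A : Type) := Clone {
  cl_mem : forall n, op A n -> Prop;
  cl_proj : forall n (i : 'I_n), cl_mem (fun x : 'I_n -> A => x i);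
  cl_comp : forall n m (f : op A n) (g : 'I_n -> op A m),
      cl_mem f -> (forall i, cl_mem (g i)) ->
      cl_mem (fun x : 'I_m -> A => f (fun i => g i x)) }.

(* A finite set of function symbols (with arities) and a finite family of
   identities  lf(x_{lpi(1)},...) ~ rf(x_{rpi(1)},...)  in nv variables. *)
Record h1cond := H1cond {
  h1_sym : finType;
  h1_ar : h1_sym -> nat;
  h1_id : finType;
  h1_nv : h1_id -> nat;
  h1_lf : h1_id -> h1_sym;
  h1_lpi : forall i, 'I_(h1_ar (h1_lf i)) -> 'I_(h1_nv i);
  h1_rf : h1_id -> h1_sym;
  h1_rpi : forall i, 'I_(h1_ar (h1_rf i)) -> 'I_(h1_nv i) }.

Definition satisfies (A : Type) (C : clone A) (S : h1cond) : Prop :=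
  exists F : forall s : h1_sym S, op A (h1_ar s),
    (forall s, cl_mem C (F s)) /\
    (forall (i : h1_id S) (x : 'I_(h1_nv i) -> A),
        F (h1_lf i) (fun j => x (h1_lpi j)) = F (h1_rf i) (fun j => x (h1_rpi j))).

Definition h1_implies (S S' : h1cond) : Prop :=
  forall (A : Type) (C : clone A), satisfies C S -> satisfies C S'.

Definition h1_trivial (S : h1cond) : Prop :=
  forall (A : Type) (C : clone A), satisfies C S.

Section SigmaG.
Variable G : h1graph.
Definition edgeT : finType := {e : gV G * gV G | gE e.1 e.2}.
Definition sigG_sym : finType := (gV G + edgeT)%type.
Definition sigG_ar (s : sigG_sym) : nat := if s is inl _ then 3 else 6.
Definition sigG_id : finType := (edgeT * bool)%type.
(* (e, true):  f_u(x,y,z) ~ g_(u,v)(x,y,x,z,y,z)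
   (e, false): f_v(x,y,z) ~ g_(u,v)(y,x,z,x,z,y)   where e = (u,v) *)
Definition sigG_lf (i : sigG_id) : sigG_sym :=
  if i.2 then inl (val i.1).1 else inl (val i.1).2.
Definition sigG_rf (i : sigG_id) : sigG_sym := inr i.1.
Definition sigG_lpi (i : sigG_id) (j : 'I_(sigG_ar (sigG_lf i))) : 'I_3 :=
  inord j.
Definition sigG_rpi (i : sigG_id) (j : 'I_(sigG_ar (sigG_rf i))) : 'I_3 :=
  inord (nth 0 (if i.2 then [:: 0; 1; 0; 2; 1; 2] else [:: 1; 0; 2; 0; 2; 1]) j).
Definition SigmaG : h1cond :=
  @H1cond sigG_sym sigG_ar sigG_id (fun _ => 3) sigG_lf sigG_lpi sigG_rf sigG_rpi.
End SigmaG.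

From mathcomp Require Import all_boot boolp.
Set Implicit Arguments. Unset Strict Implicit. Unset Printing Implicit Defensive.

(* The graphs H_n are built from minions.  A minion M consists of finite sets
   M(n), one for each arity n, together with "minor" maps M(n) -> M(m) along
   maps 'I_n -> 'I_m, composing functorially.  To M we attach the graph T(M)
   on M(3): u ~ v iff u and v are the two ternary minors of one 6-ary element
   along the maps edge_proj true / edge_proj false, which are exactly the
   variable patterns of the identities of Sigma_G.
   1. Polymorphisms of K3 are essentially unary (K3_poly_essentially_unary);
      hence a 3-colouring of T(M) yields a minion homomorphism from M to the
      projections (colorable_proj_hom).
   2. T(M x N) maps to T(M) and to T(N); if M x N maps to the projections and
      N is "locally non-projective", then M maps to the projections
      (prod_proj_hom_cancel).
   3. A height 1 condition S has a free minion F_S.  If S is non-trivial, some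
      symbol admits no compatible choice of coordinates, which makes F_S
      locally non-projective (rigid_free_minion); and a homomorphism from G
      to T(F_S) shows that S implies Sigma_G (free_graph_hom_implies).
   4. Finite graphs are coded by natural numbers.  For the k-th coded graph
      choose a non-trivial condition whose free-minion graph maps into it (if
      any); with F_k its free minion, H_n := T(F_0 x ... x F_n) is the chain. *)

Definition O0 : 'I_3 := @Ordinal 3 0 isT.
Definition O1 : 'I_3 := @Ordinal 3 1 isT.
Definition O2 : 'I_3 := @Ordinal 3 2 isT.

Lemma ord3P (x : 'I_3) : x = O0 \/ x = O1 \/ x = O2.
Proof.
by case: x => [[|[|[|x]]] Hx] //; [left | right; left | right; right]; apply: val_inj.
Qed.

Ltac ord3_cases x := let E := fresh in have [E|[E|E]] := ord3P x; subst x.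

Lemma ord3_third_unique (c d y z : 'I_3) :
  c != d -> y != c -> y != d -> z != c -> z != d -> y = z.
Proof. by ord3_cases c; ord3_cases d; ord3_cases y; ord3_cases z. Qed.

Definition succ3 (x : 'I_3) : 'I_3 :=
  match val x with 0 => O1 | 1 => O2 | _ => O0 end.

Lemma succ3_neq x : succ3 x != x. Proof. by ord3_cases x. Qed.
Lemma succ3_succ3_neq x : succ3 (succ3 x) != x. Proof. by ord3_cases x. Qed.

Definition avoid2 (a b : 'I_3) : 'I_3 :=
  if (a != O0) && (b != O0) then O0 else if (a != O1) && (b != O1) then O1 else O2.

Lemma avoid2_neql a b : avoid2 a b != a. Proof. by ord3_cases a; ord3_cases b. Qed.
Lemma avoid2_neqr a b : avoid2 a b != b. Proof. by ord3_cases a; ord3_cases b. Qed.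

Definition K3_poly (X : Type) (f : (X -> 'I_3) -> 'I_3) : Prop :=
  forall x y, (forall i, x i != y i) -> f x != f y.

(* If w x' differs from u x whenever x' <> x, and u is a bijection of 'I_3,
   then w x avoids the two other values of u, so w = u. *)
Lemma eq_of_apart_bijection (u w : 'I_3 -> 'I_3) : injective u ->
  (forall x x', x != x' -> u x != w x') -> w =1 u.
Proof.
move=> u_inj apart x; have [g ug gu] := injF_bij u_inj.
have [e|ne] := eqVneq (g (w x)) x; first by rewrite -{2}e gu.
by have := apart _ _ ne; rewrite gu eqxx.
Qed.

Definition cons3 m (x : 'I_3) (h : 'I_m -> 'I_3) : 'I_m.+1 -> 'I_3 :=
  fun i => if unlift ord0 i is Some j then h j else x.

Lemma cons3E m (y : 'I_m.+1 -> 'I_3) : cons3 (y ord0) (fun j => y (lift ord0 j)) = y.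
Proof. by apply: funext => i; rewrite /cons3; case: unliftP => [j ->|->]. Qed.

(* A polymorphism of arity m+1 is studied through its slices: the unary
   maps obtained by fixing all but the first coordinate. *)
Section Slices.
Variables (m : nat) (f : ('I_m.+1 -> 'I_3) -> 'I_3).
Hypothesis f_poly : K3_poly f.

Definition slice (h : 'I_m -> 'I_3) (x : 'I_3) : 'I_3 := f (cons3 x h).

Lemma slice_apart h h' : (forall j, h j != h' j) ->
  forall x x', x != x' -> slice h x != slice h' x'.
Proof.
by move=> hh' x x' xx'; apply: f_poly => i; rewrite /cons3; case: unlift.
Qed.

(* If one slice is a bijection, every slice equals it: pass through a tuple
   c differing everywhere from both h0 and h. *)
Lemma slices_eq_injective h0 : injective (slice h0) -> forall h, slice h =1 slice h0.
Proof.
move=> inj0 h; pose c j := avoid2 (h0 j) (h j).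
have Ec : slice c =1 slice h0.
  by apply: eq_of_apart_bijection inj0 (slice_apart _) => j; rewrite eq_sym avoid2_neql.
have inj_c : injective (slice c) by move=> a b; rewrite !Ec; apply: inj0.
move=> x; rewrite -Ec; apply: eq_of_apart_bijection inj_c (slice_apart _) _ => j.
exact: avoid2_neqr.
Qed.

(* A slice taking one value twice is constant: otherwise two shifted copies
   of h would be forced to take the same third value at apart arguments. *)
Lemma slice_collision_constant h i j : i != j -> slice h i = slice h j ->
  forall z, slice h z = slice h i.
Proof.
move=> ij e z; apply/eqP/negPn/negP => zc.
have zi : z != i by apply: contraNneq zc => ->.
have zj : z != j by apply: contraNneq zc => ->; rewrite e.
pose h1 k := succ3 (h k); pose h2 k := succ3 (succ3 (h k)).
have a01 : forall k, h k != h1 k by move=> k; rewrite eq_sym succ3_neq.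
have a02 : forall k, h k != h2 k by move=> k; rewrite eq_sym succ3_succ3_neq.
have a12 : forall k, h1 k != h2 k by move=> k; rewrite eq_sym succ3_neq.
have : slice h1 i = slice h2 j.
  apply: (@ord3_third_unique (slice h i) (slice h z)); first by rewrite eq_sym.
  - by rewrite e eq_sym; apply: slice_apart; rewrite // eq_sym.
  - by rewrite eq_sym; apply: slice_apart.
  - by rewrite eq_sym; apply: slice_apart.
  - by rewrite eq_sym; apply: slice_apart.
by move/eqP; apply/negP; apply: slice_apart.
Qed.
End Slices.

(* Polymorphisms of K3 are essentially unary.  Either a slice is a
   bijection, and f depends on the first coordinate only, or all slices are
   constant and f is a polymorphism of smaller arity. *)
Lemma K3_poly_essentially_unary m (f : ('I_m -> 'I_3) -> 'I_3) : K3_poly f ->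
  exists k : 'I_m, exists p : 'I_3 -> 'I_3, forall x, f x = p (x k).
Proof.
elim: m f => [|m IH] f f_poly.
  by have /negP[] := f_poly (fun=> O0) (fun=> O0) (fun i => False_ind _ (notF (ltn_ord i))).
have tailE y : f y = slice f (fun j => y (lift ord0 j)) (y ord0) by rewrite /slice cons3E.
have [[h0 inj0]|noinj] := pselect (exists h0, injective (slice f h0)).
  exists ord0, (slice f h0) => y.
  by rewrite tailE (slices_eq_injective f_poly inj0).
have cst h x : slice f h x = slice f h O0.
  have /injectivePn [i [j ij e]] : ~~ injectiveb (slice f h).
    by apply/injectiveP => inj; apply: noinj; exists h.
  by rewrite (slice_collision_constant f_poly ij e) (slice_collision_constant f_poly ij e O0).
have g_poly : K3_poly (fun h => slice f h O0).
  by move=> h h' hh'; rewrite -(cst h' O1); apply: slice_apart.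
have [k [p Hp]] := IH _ g_poly.
by exists (lift ord0 k), p => y; rewrite tailE cst Hp.
Qed.

Lemma K3_poly_coord_unique m (f : ('I_m -> 'I_3) -> 'I_3) k k' p p' :
  K3_poly f -> (forall x, f x = p (x k)) -> (forall x, f x = p' (x k')) -> k = k'.
Proof.
move=> f_poly fk fk'; apply/eqP/negPn/negP => kk'.
have : p O0 != p O1 by rewrite -(fk (fun=> O0)) -(fk (fun=> O1)); apply: f_poly.
have := fk' (fun i => if i == k then O1 else O0).
by rewrite fk eqxx eq_sym (negbTE kk') -(fk' (fun=> O0)) fk => ->; rewrite eqxx.
Qed.

Record minion := Minion {
  elt : nat -> finType;
  minor : forall n m, elt n -> ('I_n -> 'I_m) -> elt m;
  minor_comp : forall n m k (a : elt n) (s : 'I_n -> 'I_m) (t : 'I_m -> 'I_k),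
      minor (minor a s) t = minor a (fun i => t (s i)) }.
Arguments minor {_ _ _}.

Definition has_proj_hom (M : minion) : Prop :=
  exists xi : forall n, elt M n -> 'I_n,
    forall n m (a : elt M n) (s : 'I_n -> 'I_m), xi m (minor a s) = s (xi n a).

(* The six coordinates list the ordered pairs of distinct elements of 'I_3;
   edge_proj true / false are the first / second components. *)
Definition edge_proj (b : bool) (j : 'I_6) : 'I_3 :=
  inord (nth 0 (if b then [:: 0; 1; 0; 2; 1; 2] else [:: 1; 0; 2; 0; 2; 1]) j).

Definition edge_index (a b : 'I_3) : 'I_6 :=
  inord (match val a, val b with
         | 0, 1 => 0 | 1, 0 => 1 | 0, 2 => 2 | 2, 0 => 3 | 1, 2 => 4 | _, _ => 5 end).

Lemma edge_proj_index a b : a != b ->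
  edge_proj true (edge_index a b) = a /\ edge_proj false (edge_index a b) = b.
Proof. by ord3_cases a; ord3_cases b => // _; split; apply: val_inj; rewrite /= !inordK. Qed.

Definition edge_swap (j : 'I_6) : 'I_6 :=
  inord (match val j with 0 => 1 | 1 => 0 | 2 => 3 | 3 => 2 | 4 => 5 | _ => 4 end).

Lemma edge_proj_swap b j : edge_proj b (edge_swap j) = edge_proj (~~ b) j.
Proof.
by case: j => [[|[|[|[|[|[|j]]]]]] Hj] //; case: b; apply: val_inj; rewrite /= !inordK.
Qed.

Section MinionGraph.
Variable M : minion.

Definition Trel : rel (elt M 3) := fun u v =>
  [exists e : elt M 6, (u == minor e (edge_proj true)) && (v == minor e (edge_proj false))].

Lemma TrelP u v : reflect
  (exists e, u = minor e (edge_proj true) /\ v = minor e (edge_proj false)) (Trel u v).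
Proof.
apply: (iffP existsP) => [[e /andP[/eqP-> /eqP->]]|[e [-> ->]]]; exists e => //.
by rewrite !eqxx.
Qed.

Lemma Trel_sym : symmetric Trel.
Proof.
suff Tsym u v : Trel u v -> Trel v u by move=> u v; apply/idP/idP; apply: Tsym.
case/TrelP=> e [-> ->]; apply/TrelP; exists (minor e edge_swap).
by rewrite !minor_comp; split; congr minor; apply: funext => j; rewrite edge_proj_swap.
Qed.

Definition Tgraph : h1graph := H1Graph Trel_sym.

Lemma coloring_K3_poly (c : elt M 3 -> 'I_3) :
  (forall u v, Trel u v -> c u != c v) ->
  forall n (a : elt M n), K3_poly (fun x => c (minor a x)).
Proof.
move=> c_col n a x y xy; apply: c_col; apply/TrelP.
exists (minor a (fun i => edge_index (x i) (y i))); rewrite !minor_comp.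
by split; congr minor; apply: funext => i; have [e1 e2] := edge_proj_index (xy i); rewrite ?e1 ?e2.
Qed.

(* Choosing the essential coordinate of each such polymorphism is a minion
   homomorphism to the projections, by uniqueness of that coordinate. *)
Lemma colorable_proj_hom : three_colorable Tgraph -> has_proj_hom M.
Proof.
move=> [c c_col].
have poly := coloring_K3_poly c_col.
pose xi n a := projT1 (cid (K3_poly_essentially_unary (poly n a))).
exists xi => n m a s; rewrite /xi.
case: cid => k [p Hp]; case: cid => k' [p' Hp'] /=.
apply: (K3_poly_coord_unique (poly m (minor a s)) Hp) => x.
by rewrite minor_comp Hp'.
Qed.
End MinionGraph.

Section Product.
Variables M N : minion.

Definition prod_minor n m (a : elt M n * elt N n) (s : 'I_n -> 'I_m) : elt M m * elt N m :=
  (minor a.1 s, minor a.2 s).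

Lemma prod_minor_comp n m k (a : elt M n * elt N n) (s : 'I_n -> 'I_m) (t : 'I_m -> 'I_k) :
  prod_minor (prod_minor a s) t = prod_minor a (fun i => t (s i)).
Proof. by rewrite /prod_minor /= !minor_comp. Qed.

Definition prodM : minion :=
  @Minion (fun n => (elt M n * elt N n)%type) prod_minor prod_minor_comp.

Lemma Tgraph_fst : graph_hom (Tgraph prodM) (Tgraph M).
Proof. by exists fst => u v /TrelP[e [-> ->]]; apply/TrelP; exists e.1. Qed.

Lemma Tgraph_snd : graph_hom (Tgraph prodM) (Tgraph N).
Proof. by exists snd => u v /TrelP[e [-> ->]]; apply/TrelP; exists e.2. Qed.
End Product.

(* Q is a union of classes of the equivalence generated by taking minors. *)
Definition minor_closed (N : minion) (Q : forall n, elt N n -> Prop) : Prop :=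
  forall n m (b : elt N n) (t : 'I_n -> 'I_m), Q n b <-> Q m (minor b t).

Definition coherent_choice (N : minion) (Q : forall n, elt N n -> Prop)
    (zeta : forall n, elt N n -> option 'I_n) : Prop :=
  forall n m (b : elt N n) (t : 'I_n -> 'I_m), Q n b ->
    exists i, zeta n b = Some i /\ zeta m (minor b t) = Some (t i).

(* Some element b0 admits no coherent choice of coordinates on its class;
   this is a strong form of having no homomorphism to the projections. *)
Definition locally_nonprojective (N : minion) : Prop :=
  exists n0 (b0 : elt N n0), forall Q zeta,
    minor_closed Q -> @coherent_choice N Q zeta -> ~ Q n0 b0.

Lemma locally_nonprojective_no_proj_hom N : locally_nonprojective N -> ~ has_proj_hom N.
Proof.
move=> [n0 [b0 b0_rigid]] [xi xi_nat].
apply: (b0_rigid (fun _ _ => True) (fun n b => Some (xi n b))) => // n m b t _.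
by exists (xi n b); rewrite xi_nat.
Qed.

Definition sum_map (A A' B B' : Type) (s : A -> A') (t : B -> B') (u : A + B) : A' + B' :=
  match u with inl a => inl (s a) | inr b => inr (t b) end.

Definition ord_sum_map n n' m m' (s : 'I_n -> 'I_n') (t : 'I_m -> 'I_m')
    (k : 'I_(n + m)) : 'I_(n' + m') :=
  unsplit (sum_map s t (split k)).

Definition right_of (A B : Type) (u : A + B) : option B :=
  if u is inr b then Some b else None.

Lemma right_of_sum_map A A' B B' (s : A -> A') (t : B -> B') u :
  right_of (sum_map s t u) = omap t (right_of u).
Proof. by case: u. Qed.

(* Given a homomorphism xi from M x N to the projections, pair a : M(n) and
   b : N(m) into (M x N)(n + m) and record on which side xi lands. *)
Section ProdCancel.
Variables (M N : minion) (xi : forall n, elt (prodM M N) n -> 'I_n).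
Hypothesis xi_nat : forall n m (a : elt (prodM M N) n) (s : 'I_n -> 'I_m),
  xi (minor a s) = s (xi a).

Definition pair_sum n m (a : elt M n) (b : elt N m) : elt (prodM M N) (n + m) :=
  (minor a (@lshift n m), minor b (@rshift n m)).

Definition side n m (a : elt M n) (b : elt N m) : 'I_n + 'I_m := split (xi (pair_sum a b)).

Lemma side_minor n n' m m' (a : elt M n) (b : elt N m) (a' : elt M n') (b' : elt N m')
    (s : 'I_n -> 'I_n') (t : 'I_m -> 'I_m') :
  pair_sum a' b' = minor (pair_sum a b) (ord_sum_map s t) ->
  side a' b' = sum_map s t (side a b).
Proof. by rewrite /side => ->; rewrite xi_nat /ord_sum_map unsplitK. Qed.

Lemma pair_sum_minorl n n' m (a : elt M n) (b : elt N m) (s : 'I_n -> 'I_n') :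
  pair_sum (minor a s) b = minor (pair_sum a b) (ord_sum_map s id).
Proof.
rewrite /pair_sum /= /prod_minor /= !minor_comp; congr pair; congr minor.
  by apply: funext => i; rewrite /ord_sum_map (unsplitK (inl _)).
by apply: funext => j; rewrite /ord_sum_map (unsplitK (inr _)).
Qed.

Lemma pair_sum_minorr n m m' (a : elt M n) (b : elt N m) (t : 'I_m -> 'I_m') :
  pair_sum a (minor b t) = minor (pair_sum a b) (ord_sum_map id t).
Proof.
rewrite /pair_sum /= /prod_minor /= !minor_comp; congr pair; congr minor.
  by apply: funext => i; rewrite /ord_sum_map (unsplitK (inl _)).
by apply: funext => j; rewrite /ord_sum_map (unsplitK (inr _)).
Qed.

Lemma side_left_proj_hom n0 (b0 : elt N n0) :
  (forall n (a : elt M n), exists i, side a b0 = inl i) -> has_proj_hom M.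
Proof.
move=> left; exists (fun n a => projT1 (cid (left n a))) => n m a s.
case: cid => i ei; case: cid => i' ei' /=.
by move: ei; rewrite (side_minor (pair_sum_minorl a b0 s)) ei' => -[].
Qed.

Lemma side_right_choice n (a0 : elt M n) :
  let zeta m (b : elt N m) := right_of (side a0 b) in
  minor_closed (fun m b => zeta m b != None) /\
  coherent_choice (fun m b => zeta m b != None) zeta.
Proof.
move=> zeta; have zetaE m m' (b : elt N m) (t : 'I_m -> 'I_m') :
    zeta m' (minor b t) = omap t (zeta m b).
  by rewrite /zeta (side_minor (pair_sum_minorr a0 b t)) right_of_sum_map.
split=> m m' b t; rewrite zetaE; first by case: (zeta m b).
by case: (zeta m b) => // i _; exists i.
Qed.
End ProdCancel.

Lemma prod_proj_hom_cancel M N :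
  has_proj_hom (prodM M N) -> locally_nonprojective N -> has_proj_hom M.
Proof.
move=> [xi xi_nat] [n0 [b0 b0_rigid]].
have [[n [a0 [j a0j]]]|no_right] := pselect (exists n (a0 : elt M n) j, side xi a0 b0 = inr j).
  have [closed coherent] := side_right_choice xi_nat a0.
  by case: (b0_rigid _ _ closed coherent); rewrite /= a0j.
apply: (side_left_proj_hom xi_nat (b0 := b0)) => n a.
case E: (side xi a b0) => [i|j]; first by exists i.
by case: no_right; exists n, a, j.
Qed.

(* The free minion of a height 1 condition S: terms s(x_1, ..., x_ar) in n
   variables, each identified with a canonical representative of its class
   modulo equality in all models of S. *)
Section FreeMinion.
Variable S : h1cond.

Definition fterm n := {s : h1_sym S & {ffun 'I_(h1_ar s) -> 'I_n}}.

Definition mk_fterm n (s : h1_sym S) (x : 'I_(h1_ar s) -> 'I_n) : fterm n :=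
  Tagged (fun s => {ffun 'I_(h1_ar s) -> 'I_n}) [ffun j => x j].

Definition models (A : Type) (F : forall s : h1_sym S, op A (h1_ar s)) : Prop :=
  forall i (x : 'I_(h1_nv i) -> A),
    F (h1_lf i) (fun j => x (h1_lpi j)) = F (h1_rf i) (fun j => x (h1_rpi j)).

Definition eval_fterm A (F : forall s : h1_sym S, op A (h1_ar s)) n (p : fterm n)
    (x : 'I_n -> A) : A :=
  F (tag p) (fun j => x (tagged p j)).

Lemma eval_mk_fterm A F n s (y : 'I_(h1_ar s) -> 'I_n) (x : 'I_n -> A) :
  eval_fterm F (mk_fterm y) x = F s (fun j => x (y j)).
Proof. by rewrite /eval_fterm /=; congr F; apply: funext => j; rewrite ffunE. Qed.

Definition fterm_equiv n (p q : fterm n) : Prop :=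
  forall A (F : forall s : h1_sym S, op A (h1_ar s)), models F ->
    forall x, eval_fterm F p x = eval_fterm F q x.

Definition canon n (p : fterm n) : fterm n := odflt p [pick q | `[< fterm_equiv q p >] ].

Lemma canon_equiv n (p : fterm n) : fterm_equiv (canon p) p.
Proof. by rewrite /canon; case: pickP => [q /asboolP|]. Qed.

Lemma canon_eq n (p q : fterm n) : fterm_equiv p q -> canon p = canon q.
Proof.
move=> pq; rewrite /canon (@eq_pick _ _ (fun r => `[< fterm_equiv r q >])); last first.
  by move=> r; apply/asboolP/asboolP => rp A F F_models x; rewrite rp // pq.
by case: pickP => //= none; have /asboolP[] := none q.
Qed.

Definition free_minor n m (p : fterm n) (s : 'I_n -> 'I_m) : fterm m :=
  canon (mk_fterm (fun j => s (tagged p j))).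

Lemma eval_free_minor A F n m (p : fterm n) (s : 'I_n -> 'I_m) x : @models A F ->
  eval_fterm F (free_minor p s) x = eval_fterm F p (fun i => x (s i)).
Proof. by move=> F_models; rewrite /free_minor canon_equiv // eval_mk_fterm. Qed.

Lemma free_minor_comp n m k (p : fterm n) (s : 'I_n -> 'I_m) (t : 'I_m -> 'I_k) :
  free_minor (free_minor p s) t = free_minor p (fun i => t (s i)).
Proof.
apply: canon_eq => A F F_models x.
by rewrite !eval_mk_fterm; apply: (eval_free_minor p s (fun i => x (t i)) F_models).
Qed.

Definition free_minion : minion := @Minion fterm free_minor free_minor_comp.

Definition generic (s : h1_sym S) : fterm (h1_ar s) := mk_fterm id.

Lemma free_minor_generic s m (t : 'I_(h1_ar s) -> 'I_m) :
  free_minor (generic s) t = canon (mk_fterm t).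
Proof. by rewrite /free_minor; congr (canon (Tagged _ _)); apply/ffunP => j; rewrite !ffunE. Qed.

Lemma generic_identity i :
  free_minor (generic (h1_lf i)) (@h1_lpi S i) = free_minor (generic (h1_rf i)) (@h1_rpi S i).
Proof.
rewrite !free_minor_generic; apply: canon_eq => A F F_models x.
by rewrite !eval_mk_fterm; apply: F_models.
Qed.
End FreeMinion.

Section CompatibleChoice.
Variable S : h1cond.

Definition choice_fn := forall s : h1_sym S, option 'I_(h1_ar s).

Definition compatible (k : choice_fn) : Prop :=
  forall i : h1_id S, match k (h1_lf i), k (h1_rf i) with
    | Some j, Some j' => h1_lpi j = h1_rpi j'
    | None, None => True
    | _, _ => False end.

Definition rigid_symbol (s0 : h1_sym S) : Prop :=
  forall k, compatible k -> k s0 = None.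

Definition combine (k k' : choice_fn) : choice_fn :=
  fun s => if k s is Some j then Some j else k' s.

Lemma combine_compatible k k' : compatible k -> compatible k' -> compatible (combine k k').
Proof.
move=> ck ck' i; move: (ck i) (ck' i); rewrite /combine.
by case: (k (h1_lf i)) => [j|]; case: (k (h1_rf i)) => [j'|].
Qed.

Lemma combine_defined k k' s :
  (k s != None) || (k' s != None) -> combine k k' s != None.
Proof. by rewrite /combine; case: (k s). Qed.

Lemma total_choice_trivial k : compatible k -> (forall s, k s != None) -> h1_trivial S.
Proof.
move=> ck k_total A C.
have coord s : {j | k s = Some j} by move: (k_total s); case: (k s) => // j _; exists j.
exists (fun s (x : 'I_(h1_ar s) -> A) => x (sval (coord s))); split.
  by move=> s; apply: cl_proj.
move=> i x /=; case: (coord (h1_lf i)) (coord (h1_rf i)) => [j kj] [j' kj'] /=.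
by move: (ck i); rewrite kj kj' => ->.
Qed.

(* A non-trivial condition has a rigid symbol: otherwise merging compatible
   choices defined at each symbol yields a total one. *)
Lemma nontrivial_rigid_symbol : ~ h1_trivial S -> exists s0, rigid_symbol s0.
Proof.
move=> nontriv; apply: contrapT => no_rigid; apply: nontriv.
have defined_at s : exists k, compatible k /\ k s != None.
  apply: contrapT => none_at; apply: no_rigid; exists s => k ck.
  by apply/eqP/negPn/negP => ks; apply: none_at; exists k.
pose ks s := projT1 (cid (defined_at s)).
have [cks dks] : (forall s, compatible (ks s)) /\ (forall s, ks s s != None).
  by split=> s; case: (projT2 (cid (defined_at s))).
pose total := foldr (fun s k => combine k (ks s)) (fun _ => None) (enum (h1_sym S)).
have [ctotal dtotal] : compatible total /\ forall s, s \in enum (h1_sym S) -> total s != None.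
  rewrite /total; elim: (enum _) => [|s r [cr dr]] //=; split.
    exact: combine_compatible cr (cks s).
  move=> t; rewrite inE => /orP[/eqP-> | /dr rt]; apply: combine_defined.
    by rewrite dks orbT.
  by rewrite rt.
by apply: (total_choice_trivial ctotal) => s; apply: dtotal; rewrite mem_enum.
Qed.
End CompatibleChoice.

(* A rigid symbol makes the free minion locally non-projective: a coherent
   choice on the class of the generic term of s0 restricts to a compatible
   choice defined at s0. *)
Lemma rigid_free_minion S (s0 : h1_sym S) :
  rigid_symbol s0 -> locally_nonprojective (free_minion S).
Proof.
move=> rigid; exists (h1_ar s0), (generic s0) => Q zeta closed coherent Q0.
pose k : choice_fn S := fun s =>
  if pselect (Q _ (generic s)) then zeta _ (generic s) else None.
suff ck : compatible k.
  have := rigid _ ck; rewrite /k; case: pselect => //= _.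
  by have [j [zj _]] := coherent _ _ _ id Q0; rewrite zj.
move=> i; rewrite /k /=.
have Q_iff : Q _ (generic (h1_lf i)) <-> Q _ (generic (h1_rf i)).
  split=> [/(closed _ _ _ (@h1_lpi S i)) | /(closed _ _ _ (@h1_rpi S i))] q.
    by apply/(closed _ _ _ (@h1_rpi S i)); rewrite /= -generic_identity.
  by apply/(closed _ _ _ (@h1_lpi S i)); rewrite /= generic_identity.
case: pselect => ql; case: pselect => qr //.
- have [j [-> e]] := coherent _ _ _ (@h1_lpi S i) ql.
  have [j' [-> e']] := coherent _ _ _ (@h1_rpi S i) qr.
  by move: e e'; rewrite /= generic_identity => -> [].
- by case: qr; apply/Q_iff.
- by case: ql; apply/Q_iff.
Qed.

Lemma eval_fterm_clone S A (C : clone A) (F : forall s : h1_sym S, op A (h1_ar s)) :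
  (forall s, cl_mem C (F s)) -> forall n (p : fterm S n), cl_mem C (eval_fterm F p).
Proof. by move=> F_clone n p; apply: (cl_comp (F_clone (tag p))) => j; apply: cl_proj. Qed.

(* A homomorphism h from G to T(F_S) shows that S implies Sigma_G: interpret
   f_v as h v and g_(u,v) as a 6-ary element witnessing the edge h u ~ h v. *)
Lemma free_graph_hom_implies S (G : h1graph) :
  graph_hom G (Tgraph (free_minion S)) -> h1_implies S (SigmaG G).
Proof.
move=> [h h_hom] A C [F [F_clone F_models]].
have witness u v : gE u v -> {w : fterm S 6 |
    h u = free_minor w (edge_proj true) /\ h v = free_minor w (edge_proj false)}.
  by move=> uv; apply: cid; have /TrelP := h_hom _ _ uv.
pose F' (s : sigG_sym G) : op A (sigG_ar s) := match s with
  | inl v => eval_fterm F (h v)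
  | inr e => eval_fterm F (sval (witness _ _ (svalP e))) end.
exists F'; split; first by case=> [v|e]; apply: eval_fterm_clone.
move=> [[[u v] uv] b] x /=; case: (witness _ _ _) => w [hu hv] /=.
move: x; case: b => x /=; rewrite ?hu ?hv eval_free_minor //.
  by congr eval_fterm; apply: funext => j; rewrite /sigG_lpi inord_val.
by congr eval_fterm; apply: funext => j; rewrite /sigG_lpi inord_val.
Qed.

Lemma graph_hom_trans (G1 G2 G3 : h1graph) :
  graph_hom G1 G2 -> graph_hom G2 G3 -> graph_hom G1 G3.
Proof. by move=> [f hf] [g hg]; exists (fun x => g (f x)) => x y /hf/hg. Qed.

Definition graph_code := (nat * seq (nat * nat))%type.

Definition code_rel (c : graph_code) : rel 'I_c.1 :=
  fun x y => ((x : nat, y : nat) \in c.2) || ((y : nat, x : nat) \in c.2).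

Lemma code_rel_sym (c : graph_code) : symmetric (@code_rel c).
Proof. by move=> x y; rewrite /code_rel orbC. Qed.

Definition code_graph (c : graph_code) : h1graph := H1Graph (@code_rel_sym c).

Definition graph_of_nat (k : nat) : h1graph := code_graph (odflt (0, [::]) (unpickle k)).

Lemma graph_has_code (G : h1graph) :
  exists c, graph_hom G (code_graph c) /\ graph_hom (code_graph c) G.
Proof.
pose edges := [seq (val (enum_rank p.1), val (enum_rank p.2)) |
               p <- enum [pred p : gV G * gV G | gE p.1 p.2]].
have rank_val (a : 'I_#|gV G|) x : val a = val (enum_rank x) -> enum_val a = x.
  by move=> /val_inj ->; rewrite enum_rankK.
exists (#|gV G|, edges); split.
  exists (fun x => enum_rank x) => x y xy; apply/orP; left; apply/mapP.
  by exists (x, y); rewrite ?mem_enum.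
exists (fun a => enum_val a) => a b /orP[] /mapP[[u v]].
  by rewrite mem_enum => uv [/rank_val-> /rank_val->].
by rewrite mem_enum => uv [/rank_val-> /rank_val->]; rewrite gE_sym.
Qed.

Definition represents (G : h1graph) (S : h1cond) : Prop :=
  (exists s0 : h1_sym S, rigid_symbol s0) /\ graph_hom (Tgraph (free_minion S)) G.

Definition null_cond : h1cond :=
  @H1cond unit (fun _ => 0) void (fun _ => 0)
    (fun i => match i with end) (fun i => match i with end)
    (fun i => match i with end) (fun i => match i with end).

Lemma null_cond_rigid : rigid_symbol (tt : h1_sym null_cond).
Proof. by move=> k _; case: (k tt) => // [[]]. Qed.

Definition cond_of_nat (k : nat) : h1cond :=
  if pselect (exists S, represents (graph_of_nat k) S) is left ex then projT1 (cid ex)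
  else null_cond.

Lemma cond_of_nat_rigid k : exists s0 : h1_sym (cond_of_nat k), rigid_symbol s0.
Proof.
rewrite /cond_of_nat; case: pselect => [ex|_]; last by exists tt; apply: null_cond_rigid.
by case: (projT2 (cid ex)).
Qed.

Lemma cond_of_nat_hom k S : represents (graph_of_nat k) S ->
  graph_hom (Tgraph (free_minion (cond_of_nat k))) (graph_of_nat k).
Proof.
move=> rep; rewrite /cond_of_nat; case: pselect => [ex|[]]; last by exists S.
by case: (projT2 (cid ex)).
Qed.

Fixpoint chain_minion (n : nat) : minion :=
  if n is n'.+1 then prodM (chain_minion n') (free_minion (cond_of_nat n))
  else free_minion (cond_of_nat 0).

(* Each factor is locally non-projective, so no product maps to the
   projections. *)
Lemma chain_minion_no_proj_hom n : ~ has_proj_hom (chain_minion n).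
Proof.
have nonproj k : locally_nonprojective (free_minion (cond_of_nat k)).
  by have [s0 rigid] := cond_of_nat_rigid k; apply: rigid_free_minion rigid.
elim: n => [|n IH] /=; first exact: locally_nonprojective_no_proj_hom (nonproj 0).
by move=> proj; apply/IH/(prod_proj_hom_cancel proj (nonproj _)).
Qed.

Lemma chain_minion_last k :
  graph_hom (Tgraph (chain_minion k)) (Tgraph (free_minion (cond_of_nat k))).
Proof. by case: k => [|k] /=; [exists id | apply: Tgraph_snd]. Qed.

(* H_n := T(chain_minion n): not 3-colourable by 1 and the previous lemma,
   a chain by projection, and a non-trivial S is represented by some coded
   graph k, whence H_(k+1) -> H_k -> T(F_k) -> graph k -> T(F_S). *)
Theorem lemma3p7 :
  exists H : nat -> h1graph,
    (forall n, 1 <= n -> ~ three_colorable (H n)) /\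
    (forall n, 1 <= n -> graph_hom (H n.+1) (H n)) /\
    (forall S : h1cond, ~ h1_trivial S ->
       exists n, 1 <= n /\ h1_implies S (SigmaG (H n))).
Proof.
exists (fun n => Tgraph (chain_minion n)); split; [|split].
- by move=> n _ /colorable_proj_hom; apply: chain_minion_no_proj_hom.
- by move=> n _; apply: Tgraph_fst.
move=> S nontriv; have [s0 rigid] := nontrivial_rigid_symbol nontriv.
have [c [to_code from_code]] := graph_has_code (Tgraph (free_minion S)).
have codeE : graph_of_nat (pickle c) = code_graph c by rewrite /graph_of_nat pickleK.
have rep : represents (graph_of_nat (pickle c)) S.
  by split; [exists s0 | rewrite codeE].
exists (pickle c).+1; split => //; apply: free_graph_hom_implies.
apply: graph_hom_trans (Tgraph_fst _ _) _; apply: graph_hom_trans (chain_minion_last _) _.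
by apply: graph_hom_trans (cond_of_nat_hom rep) _; rewrite codeE.
Qed.
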